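(* Let $\mathcal{D}$ be a distribution on $[n]$, $\varepsilon>0$, and let $\mathcal{P}$ be any bounded-derivative property of functions $f:[n]\to\mathbb{R}$. There is a tester for $\mathcal{P}$ with respect to $\mathcal{D}$ with proximity parameter $\varepsilon$ making $24\,\varepsilon^{-1}\Delta^*(\mathcal{D})$ queries.
   Context: A bounded-derivative property on $[n]$ is $\mathcal{P}=\{g:[n]\to\mathbb{R}: l(t)\le g(t+1)-g(t)\le u(t)\ \forall t\in[n-1]\}$ for some $l,u:[n-1]\to\mathbb{R}$ with $l(t)<u(t)$. A tester w.r.t. $\mathcal{D}$ with proximity parameter $\varepsilon$ knows $\mathcal{D}$, queries $f$, accepts with probability $>2/3$ if $f\in\mathcal{P}$ and rejects with probability $>2/3$ if $\min_{g\in\mathcal{P}}\Pr_{x\sim\mathcal{D}}[f(x)\ne g(x)]>\varepsilon$. $\Delta^*(\mathcal{D})$ is the minimum over binary search trees $T$ on $[n]$ of $\mathbb{E}_{v\sim\mathcal{D}}[\mathrm{depth}_T(v)]$, where depth is the number of edges to the root. *)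

From HB Require Import structures.
From mathcomp Require Import all_boot all_order all_algebra.
From mathcomp Require Import boolp classical_sets reals.
Set Implicit Arguments. Unset Strict Implicit. Unset Printing Implicit Defensive.
Import Order.TTheory GRing.Theory Num.Theory.
Local Open Scope ring_scope.

Section Defs.
Variable R : realType.

(* [n] is represented by 'I_n = {0,...,n-1}; point t and t+1 are consecutive. *)

Definition is_distr (n : nat) (D : 'I_n -> R) : Prop :=
  (forall x, 0 <= D x) /\ \sum_(x < n) D x = 1.

Definition bdp_params (n : nat) (l u : nat -> R) : Prop :=
  forall t : nat, (t.+1 < n)%N -> l t < u t.

Definition in_bdp (n : nat) (l u : nat -> R) (g : 'I_n -> R) : Prop :=
  forall i j : 'I_n, nat_of_ord j = (nat_of_ord i).+1 ->
    l i <= g j - g i <= u i.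

Definition distD (n : nat) (D : 'I_n -> R) (f g : 'I_n -> R) : R :=
  \sum_(x < n | f x != g x) D x.

(* min_{g in P} Pr_D[f <> g] > eps  (the minimum is attained, so this is
   equivalent to: every g in P has distance > eps). *)
Definition far_from_bdp (n : nat) (D : 'I_n -> R) (l u : nat -> R)
    (eps : R) (f : 'I_n -> R) : Prop :=
  forall g, in_bdp l u g -> distD D f g > eps.

(* Deterministic adaptive query algorithms: trees with real-valued answers. *)
Inductive qtree (n : nat) : Type :=
  | Decide : bool -> qtree n
  | Query : 'I_n -> (R -> qtree n) -> qtree n.

Fixpoint run (n : nat) (t : qtree n) (f : 'I_n -> R) : bool :=
  match t with
  | Decide b => b
  | Query x k => run (k (f x)) f
  end.

Inductive queries_le (n : nat) : nat -> qtree n -> Prop :=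
  | ql_decide q b : queries_le q (Decide n b)
  | ql_query q x k : (forall a, queries_le q (k a)) ->
      queries_le q.+1 (Query x k).

(* A randomized tester: a probability distribution p over a finite set of
   random seeds, each seed determining a deterministic query algorithm. *)
Definition accept_prob (n : nat) (Omega : finType) (p : Omega -> R)
    (T : Omega -> qtree n) (f : 'I_n -> R) : R :=
  \sum_(w : Omega | run (T w) f) p w.

Definition is_tester (n : nat) (D : 'I_n -> R) (l u : nat -> R) (eps : R)
    (q : nat) (Omega : finType) (p : Omega -> R) (T : Omega -> qtree n) : Prop :=
  [/\ (forall w, 0 <= p w), \sum_(w : Omega) p w = 1,
      (forall w, queries_le q (T w)),
      (forall f, in_bdp l u f -> accept_prob p T f > 2%:R / 3%:R) &
      (forall f, far_from_bdp D l u eps f ->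
                 1 - accept_prob p T f > 2%:R / 3%:R)].

Inductive bst : Type :=
  | Leaf : bst
  | Node : bst -> nat -> bst -> bst.

Fixpoint inorder (T : bst) : seq nat :=
  match T with
  | Leaf => [::]
  | Node a k b => inorder a ++ k :: inorder b
  end.

Definition is_bst_on (n : nat) (T : bst) : Prop := inorder T = iota 0 n.

Fixpoint depth (T : bst) (v : nat) : nat :=
  match T with
  | Leaf => 0
  | Node a k b =>
      if v == k then 0
      else if v \in inorder a then (depth a v).+1 else (depth b v).+1
  end.

Definition exp_depth (n : nat) (D : 'I_n -> R) (T : bst) : R :=
  \sum_(v < n) D v * (depth T v)%:R.

(* Delta^*(D) = min over BSTs T on [n] of E_{v ~ D}[depth_T(v)]
   (inf of a finite nonempty set of values, hence a min). *)
Definition Delta_star (n : nat) (D : 'I_n -> R) : R :=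
  inf [set c | exists T, is_bst_on n T /\ c = exp_depth D T].

End Defs.

From HB Require Import structures.
From mathcomp Require Import all_boot all_order all_algebra.
From mathcomp Require Import boolp classical_sets reals.
From mathcomp Require Import lra ring zify.
Set Implicit Arguments. Unset Strict Implicit. Unset Printing Implicit Defensive.
Import Order.TTheory GRing.Theory Num.Theory.

(* The tester samples k ~ 3/eps points from D and, for each sample, queries
   every key on its root-to-sample path in a binary search tree T of nearly
   optimal expected depth; it rejects iff some sample x is incompatible with an
   ancestor y, i.e. f y - f x violates the bounds obtained by summing l and u
   between them.  It accepts outright once the paths exceed a budget
   B ~ 24 Delta*(D) / eps of queries.
   Functions of the property pass every check.  Conversely, the points that
   pass their check are pairwise compatible, because the common ancestor of
   x < y lies between them on both paths; so f restricted to them extends to a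
   function of the property (the upper envelope of the lower bounds they
   force).  Hence a far function fails the check with probability > eps at each
   sample, and passes all k with probability at most (1 - eps)^k <= 1/7.  The
   expected number of queries is k E_D[depth_T] ~ 3 Delta*(D) / eps, so by
   Markov the budget is exceeded with probability below 2/11, and a far
   function is accepted with probability below 1/7 + 2/11 < 1/3.  When
   Delta*(D) < eps or eps >= 1, no function is eps-far and the tester that
   always accepts works. *)

Fixpoint bst_path (T : bst) (v : nat) : seq nat :=
  match T with
  | Leaf => [::]
  | Node a k b =>
      k :: (if v == k then [::]
            else if v \in inorder a then bst_path a v else bst_path b v)
  end.

Definition bst_root (T : bst) : nat := if T is Node _ k _ then k else 0.

Lemma size_bst_path T v : v \in inorder T -> size (bst_path T v) = (depth T v).+1.
Proof.
elim: T => [//|a IHa k b IHb] /=; rewrite mem_cat in_cons.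
case: eqP => [//|_]; case: ifP => [va _|_ /= vb]; first by rewrite IHa.
by rewrite IHb.
Qed.

Lemma mem_bst_path T v : v \in inorder T -> v \in bst_path T v.
Proof.
elim: T => [//|a IHa k b IHb] /=; rewrite mem_cat !in_cons.
case: eqP => [-> //|_]; case: ifP => [va _|_ /= vb]; first by rewrite IHa ?orbT.
by rewrite IHb ?orbT.
Qed.

Lemma bst_path_sub T v : {subset bst_path T v <= inorder T}.
Proof.
elim: T => [//|a IHa k b IHb] y /=; rewrite in_cons mem_cat in_cons.
case/orP=> [->|]; first by rewrite orbT.
case: eqP => [//|_]; case: ifP => _ => [/IHa|/IHb] ->; by rewrite ?orbT.
Qed.

Lemma bst_path_head T v y : y \in bst_path T v ->
  (y == bst_root T) || (y \in behead (bst_path T v)).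
Proof. by case: T => [//|a k b]; rewrite in_cons. Qed.

Lemma depth_gt0 a k b v : v != k -> (0 < depth (Node a k b) v)%N.
Proof. by rewrite /= => /negbTE ->; case: ifP. Qed.

Lemma bst_path_common T x y : pairwise ltn (inorder T) ->
  x \in inorder T -> y \in inorder T -> (x < y)%N ->
  exists2 z, (z \in bst_path T x) && (z \in bst_path T y) & (x <= z <= y)%N.
Proof.
elim: T => [//|a IHa k b IHb] /=.
rewrite pairwise_cat /= => /and3P[/allrelP ltab Ha /andP[/allP ltkb Hb]].
rewrite !mem_cat !in_cons => Tx Ty xy.
have lt_ak w : w \in inorder a -> (w < k)%N by move/ltab; apply; exact: mem_head.
have lt_kb w : w \in inorder b -> (k < w)%N by move/ltkb.
have root_ok : (x <= k <= y)%N -> exists2 z,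
    (z \in k :: _) && (z \in k :: _) & (x <= z <= y)%N.
  by exists k; rewrite ?mem_head.
case: (x =P k) => [xk|/eqP/negbTE xk]; first by apply: root_ok; lia.
case: (y =P k) => [yk|/eqP/negbTE yk]; first by apply: root_ok; lia.
rewrite xk yk /= in Tx Ty.
case: ifP Tx => xa /= Tx; case: ifP Ty => ya /= Ty.
- have [z /andP[zx zy] xzy] := IHa Ha xa ya xy.
  by exists z; rewrite // !in_cons zx zy !orbT.
- apply: root_ok; have := lt_ak _ xa; have := lt_kb _ Ty; lia.
- exfalso; have := lt_ak _ ya; have := lt_kb _ Tx; lia.
- have [z /andP[zx zy] xzy] := IHb Hb Tx Ty xy.
  by exists z; rewrite // !in_cons zx zy !orbT.
Qed.

Local Open Scope ring_scope.

Section Compatibility.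
Context {R : realType} (l u : nat -> R).
Implicit Types (h : nat -> R) (x y z : nat) (S : seq nat).

Definition lsum x y := \sum_(x <= t < y) l t.
Definition usum x y := \sum_(x <= t < y) u t.

(* Read with x <= y: some function of the property takes the values h x and
   h y at x and y. *)
Definition compatible h x y := (lsum x y <= h y - h x) && (h y - h x <= usum x y).

Definition compatibleC h x y :=
  if (x <= y)%N then compatible h x y else compatible h y x.

Lemma compatible_refl h x : compatible h x x.
Proof. by rewrite /compatible /lsum /usum !big_geq // subrr lexx. Qed.

Lemma compatible_trans h x z y : (x <= z <= y)%N ->
  compatible h x z -> compatible h z y -> compatible h x y.
Proof.
move=> /andP[xz zy] /andP[lxz uxz] /andP[lzy uzy].
have lsum_cat : lsum x y = lsum x z + lsum z y by rewrite /lsum (big_cat_nat xz zy).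
have usum_cat : usum x y = usum x z + usum z y by rewrite /usum (big_cat_nat xz zy).
by rewrite /compatible lsum_cat usum_cat; apply/andP; split; lra.
Qed.

Definition path_compatible h T x := all (compatibleC h x) (bst_path T x).

Lemma eq_path_compatible h1 h2 T x : x \in inorder T ->
  {in bst_path T x, h1 =1 h2} -> path_compatible h1 T x = path_compatible h2 T x.
Proof.
move=> Tx h12; apply: eq_in_all => y Ty.
by rewrite /compatibleC /compatible !h12 // mem_bst_path.
Qed.

Lemma path_compatible_root h T : path_compatible h T (bst_root T).
Proof.
case: T => // a k b; rewrite /path_compatible /= eqxx /= andbT.
by rewrite /compatibleC leqnn compatible_refl.
Qed.

Lemma path_compatible_pair h T x y : pairwise ltn (inorder T) ->
  x \in inorder T -> y \in inorder T ->
  path_compatible h T x -> path_compatible h T y -> (x <= y)%N -> compatible h x y.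
Proof.
move=> sT Tx Ty /allP hx /allP hy; rewrite leq_eqVlt => /predU1P[->|xy].
  exact: compatible_refl.
have [z /andP[zx zy] /andP[xz zy']] := bst_path_common sT Tx Ty xy.
apply: (@compatible_trans _ x z y); first by rewrite xz zy'.
  by have := hx _ zx; rewrite /compatibleC xz.
have := hy _ zy; rewrite /compatibleC; case: leqP => // yz.
by have -> : z = y by lia.
Qed.

(* Every g in the property has g x - g s >= offset x s. *)
Definition offset x s := if (s <= x)%N then lsum s x else - usum x s.

Lemma offsetS x s : offset x.+1 s = offset x s + (if (s <= x)%N then l x else u x).
Proof.
rewrite /offset; case: (leqP s x) => [sx|xs].
  by rewrite (leq_trans sx) // /lsum big_nat_recr.
case: (leqP s x.+1) => [sx1|x1s].
  have -> : s = x.+1 by lia.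
  by rewrite /lsum /usum big_geq // big_nat1 addNr.
by rewrite /usum [in RHS]big_ltn 1?ltnW // opprD addrAC addNr add0r.
Qed.

(* The least function of the property that lies above h on S. *)
Definition envelope h s0 S x :=
  \big[Num.max/h s0 + offset x s0]_(s <- S) (h s + offset x s).

Lemma envelope_shift h s0 S x y c :
  (forall s, h s + offset y s <= h s + offset x s + c) ->
  envelope h s0 S y <= envelope h s0 S x + c.
Proof.
move=> le_yx; apply: (big_ind2 (fun a b => a <= b + c)) => // a b a' b' ab ab'.
by rewrite ge_max (le_trans ab) ?(le_trans ab') // lerD2r le_max lexx ?orbT.
Qed.

Lemma envelope_step h s0 S x : l x <= u x ->
  l x <= envelope h s0 S x.+1 - envelope h s0 S x <= u x.
Proof.
move=> lu.
have lo : envelope h s0 S x <= envelope h s0 S x.+1 + - l x.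
  by apply: envelope_shift => s; rewrite offsetS; case: ifP => _; lra.
have hi : envelope h s0 S x.+1 <= envelope h s0 S x + u x.
  by apply: envelope_shift => s; rewrite offsetS; case: ifP => _; lra.
by apply/andP; split; lra.
Qed.

Lemma envelope_eq h s0 S x : s0 \in S -> x \in S ->
  {in S &, forall a b, (a <= b)%N -> compatible h a b} -> envelope h s0 S x = h x.
Proof.
move=> Ss0 Sx hS.
have below s : s \in S -> h s + offset x s <= h x.
  move=> Ss; rewrite /offset; case: leqP => [sx|xs].
    by have /andP[] := hS _ _ Ss Sx sx; lra.
  by have /andP[] := hS _ _ Sx Ss (ltnW xs); lra.
apply/le_anti/andP; split.
  by rewrite /envelope big_seq; apply: bigmax_le => [|s Ss]; apply: below.
by apply: bigmax_sup_seq Sx _ _; rewrite // /offset leqnn /lsum big_geq ?addr0.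
Qed.

Lemma compatible_extension h s0 S : s0 \in S ->
  {in S &, forall a b, (a <= b)%N -> compatible h a b} ->
  exists2 g : nat -> R, (forall t, l t <= u t -> l t <= g t.+1 - g t <= u t) &
    {in S, g =1 h}.
Proof.
move=> Ss0 hS; exists (envelope h s0 S) => [t|x Sx]; first exact: envelope_step.
exact: envelope_eq.
Qed.

End Compatibility.

Section OrdinalFunctions.
Variables (R : realType) (m : nat) (l u : nat -> R).
Local Notation n := m.+1.
Implicit Types (f g : 'I_n -> R) (S : seq nat).

(* Keys outside [0, n) are sent to f 0 by [inord]. *)
Definition fnat f (y : nat) : R := f (inord y).

Lemma fnat_ord f (x : 'I_n) : fnat f x = f x.
Proof. by rewrite /fnat inord_val. Qed.

Lemma in_bdp_compatible f : in_bdp l u f ->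
  forall x y, (x <= y < n)%N -> compatible l u (fnat f) x y.
Proof.
move=> Pf x; elim=> [|y IHy] /andP[xy yn].
  by rewrite (_ : x = 0%N) ?compatible_refl //; lia.
case: (x =P y.+1) => [->|/eqP xNy]; first exact: compatible_refl.
apply: (@compatible_trans _ _ _ _ x y); first by apply/andP; split; lia.
  by apply: IHy; apply/andP; split; lia.
have := Pf (inord y) (inord y.+1); rewrite !inordK; try lia.
by case/(_ erefl)/andP=> ly uy; rewrite /compatible /lsum /usum !big_nat1 /fnat ly uy.
Qed.

Lemma in_bdp_path_compatible f T x : is_bst_on n T -> in_bdp l u f ->
  (x < n)%N -> path_compatible l u (fnat f) T x.
Proof.
move=> bstT Pf xn; apply/allP => y /bst_path_sub; rewrite bstT mem_iota => /andP[_ yn].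
by rewrite /compatibleC; case: leqP => xy; apply: in_bdp_compatible => //; lia.
Qed.

Hypothesis lu : bdp_params n l u.

Lemma compatible_extension_bdp f s0 S : s0 \in S ->
  {in S &, forall a b, (a <= b)%N -> compatible l u (fnat f) a b} ->
  exists2 g, in_bdp l u g & forall x : 'I_n, val x \in S -> g x = f x.
Proof.
move=> Ss0 hS; have [g gP gS] := compatible_extension Ss0 hS.
exists (fun x : 'I_n => g x) => [i j ji|x Sx]; last by rewrite gS // fnat_ord.
by rewrite ji; apply: gP; apply: ltW; apply: lu; rewrite -ji ltn_ord.
Qed.

Lemma distD_le_mass_outside (D : 'I_n -> R) f g S : (forall x, 0 <= D x) ->
  (forall x : 'I_n, val x \in S -> g x = f x) ->
  distD D f g <= \sum_(x < n | val x \notin S) D x.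
Proof.
move=> D0 gS; rewrite /distD [leRHS]big_mkcond [leLHS]big_mkcond /=.
apply: ler_sum => x _; case: (boolP (val x \in S)) => [Sx|_] /=.
  by rewrite gS // eqxx.
by case: ifP.
Qed.

Lemma far_mass_outside (D : 'I_n -> R) eps f s0 S : (forall x, 0 <= D x) ->
  far_from_bdp D l u eps f -> s0 \in S ->
  {in S &, forall a b, (a <= b)%N -> compatible l u (fnat f) a b} ->
  eps < \sum_(x < n | val x \notin S) D x.
Proof.
move=> D0 farf Ss0 hS; have [g Pg gS] := compatible_extension_bdp Ss0 hS.
exact: lt_le_trans (farf g Pg) (distD_le_mass_outside D0 gS).
Qed.

End OrdinalFunctions.

Section QuerySeq.
Variables (R : realType) (n : nat).

(* [K] sees the answers extended by 0 outside [xs]. *)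
Fixpoint query_seq (xs : seq 'I_n) (K : ('I_n -> R) -> bool) : qtree R n :=
  match xs with
  | [::] => Decide R n (K (fun _ => 0))
  | x :: xs =>
      Query x (fun a => query_seq xs (fun h => K (fun y => if y == x then a else h y)))
  end.

Lemma run_query_seq xs K f :
  run (query_seq xs K) f = K (fun y => if y \in xs then f y else 0).
Proof.
elim: xs K => [|x xs IHxs] K /=; first by congr K; apply: funext.
by rewrite IHxs; congr K; apply: funext => y; rewrite in_cons; case: eqP => [->|].
Qed.

Lemma queries_le_query_seq xs K : queries_le (size xs) (query_seq xs K).
Proof. by elim: xs K => [|x xs IHxs] K /=; constructor. Qed.

Lemma queries_le_trans q q' (t : qtree R n) :
  queries_le q t -> (q <= q')%N -> queries_le q' t.
Proof.
move=> qt; elim: qt q' => [q0 b|q0 x k _ IHk] q' le_q; first by constructor.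
by case: q' le_q => // q' le_q; constructor => a; apply: IHk.
Qed.

End QuerySeq.

Section FiniteSums.
Variables (R : realType) (Omega : finType) (p : Omega -> R).
Hypothesis p_ge0 : forall w, 0 <= p w.

Lemma sum_orb_le (P Q : pred Omega) :
  \sum_(w | P w || Q w) p w <= \sum_(w | P w) p w + \sum_(w | Q w) p w.
Proof.
rewrite big_mkcond [X in _ <= X + _]big_mkcond [X in _ <= _ + X]big_mkcond.
rewrite -big_split /=; apply: ler_sum => w _.
by case: (P w); case: (Q w); rewrite /= ?addr0 ?add0r ?lerDl.
Qed.

Lemma markov_nat (X : Omega -> nat) (B : nat) :
  B%:R * \sum_(w | (B <= X w)%N) p w <= \sum_w p w * (X w)%:R.
Proof.
rewrite mulr_sumr big_mkcond /=; apply: ler_sum => w _.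
case: ifP => [BX|_]; last by rewrite mulr_ge0.
by rewrite mulrC ler_wpM2l // ler_nat.
Qed.

End FiniteSums.

Section ProductWeight.
Variables (R : realType) (I : finType) (k : nat) (D : I -> R).
Implicit Types (w : {ffun 'I_k -> I}).

Definition prod_weight w := \prod_i D (w i).

Lemma prod_weight_ge0 w : (forall x, 0 <= D x) -> 0 <= prod_weight w.
Proof. by move=> D0; apply: prodr_ge0. Qed.

Lemma sum_prod_weight : \sum_w prod_weight w = (\sum_x D x) ^+ k.
Proof. by rewrite -(bigA_distr_bigA (fun _ => D)) prodr_const card_ord. Qed.

Lemma sum_prod_weight_forall (P : pred I) :
  \sum_(w : {ffun 'I_k -> I} | [forall i, P (w i)]) prod_weight w = (\sum_(x | P x) D x) ^+ k.
Proof.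
rewrite -[in RHS](card_ord k) -prodr_const bigA_distr_big; apply: eq_bigl => w.
by apply/forallP/ffun_onP.
Qed.

Lemma sum_prod_weight_coord (i : 'I_k) (F : I -> R) : \sum_x D x = 1 ->
  \sum_w prod_weight w * F (w i) = \sum_x D x * F x.
Proof.
move=> D1; pose G j x := if j == i then D x * F x else D x.
transitivity (\sum_(w : {ffun 'I_k -> I}) \prod_j G j (w j)).
  apply: eq_bigr => w _; rewrite /prod_weight (bigD1 i) //= [RHS](bigD1 i) //=.
  by rewrite /G eqxx mulrAC; congr (_ * _); apply: eq_bigr => j /negbTE ->.
have G1 j : j != i -> \sum_x G j x = 1.
  by move=> /negbTE ji; rewrite -D1; apply: eq_bigr => x _; rewrite /G ji.
rewrite -(bigA_distr_bigA G) (bigD1 i) //= [X in _ * X]big1 ?mulr1 //.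
by apply: eq_bigr => x _; rewrite /G eqxx.
Qed.

End ProductWeight.

Section PathTester.
Variables (R : realType) (m : nat) (l u : nat -> R) (T : bst) (k B : nat).
Local Notation n := m.+1.
Hypothesis bstT : is_bst_on n T.
Implicit Types (w : {ffun 'I_k -> 'I_n}) (f : 'I_n -> R).

Lemma mem_bst (x : 'I_n) : val x \in inorder T.
Proof. by rewrite bstT mem_iota /= ltn_ord. Qed.

Definition total_depth w := (\sum_i depth T (w i))%N.

(* All sampled paths start at the root, which is queried only once. *)
Definition path_queries w : seq 'I_n :=
  inord (bst_root T) ::
  flatten [seq [seq inord y | y <- behead (bst_path T (w i))] | i <- enum 'I_k].

Definition paths_compatible w f :=
  [forall i, path_compatible l u (fnat f) T (w i)].

Definition path_tester w : qtree R n :=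
  if (total_depth w < B)%N then query_seq (path_queries w) (paths_compatible w)
  else Decide R n true.

Lemma size_path_queries w : size (path_queries w) = (total_depth w).+1.
Proof.
rewrite /= size_flatten /shape -map_comp sumnE big_map big_enum /=.
congr _.+1; apply: eq_bigr => i _.
by rewrite /= size_map size_behead size_bst_path ?mem_bst.
Qed.

Lemma queries_le_path_tester w : queries_le B (path_tester w).
Proof.
rewrite /path_tester; case: ltnP => [tdB|_]; last by constructor.
by apply: queries_le_trans (queries_le_query_seq _ _) _; rewrite size_path_queries.
Qed.

Lemma run_path_tester w f :
  run (path_tester w) f = (B <= total_depth w)%N || paths_compatible w f.
Proof.
rewrite /path_tester; case: ltnP => [_|//]; rewrite run_query_seq orFb.
apply: eq_forallb => i; apply: eq_path_compatible => [|y Py]; first exact: mem_bst.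
rewrite /fnat ifT // in_cons; have /orP[/eqP->|Py'] := bst_path_head Py.
  by rewrite eqxx.
by apply/orP; right; apply/flatten_mapP; exists i; rewrite ?mem_enum ?map_f.
Qed.

Variable D : 'I_n -> R.
Hypotheses (D_distr : is_distr D) (lu : bdp_params n l u).

Lemma accept_path_tester_bdp f : in_bdp l u f -> accept_prob (prod_weight D) path_tester f = 1.
Proof.
move=> Pf; have [D0 D1] := D_distr.
rewrite /accept_prob (eq_bigl xpredT) ?sum_prod_weight ?D1 ?expr1n // => w.
rewrite run_path_tester; apply/orP; right; apply/forallP => i.
exact: in_bdp_path_compatible.
Qed.

Lemma expected_total_depth :
  \sum_w prod_weight D w * (total_depth w)%:R = k%:R * exp_depth D T.
Proof.
have [_ D1] := D_distr.
under eq_bigr do rewrite natr_sum mulr_sumr.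
rewrite exchange_big /=.
under eq_bigr do rewrite (sum_prod_weight_coord _ (fun x : 'I_n => (depth T x)%:R) D1).
by rewrite sumr_const card_ord mulr_natl.
Qed.

Lemma mass_path_compatible_far eps f : far_from_bdp D l u eps f ->
  \sum_(x < n | path_compatible l u (fnat f) T x) D x < 1 - eps.
Proof.
move=> farf; have [D0 D1] := D_distr.
pose good := [seq x <- iota 0 n | path_compatible l u (fnat f) T x].
have good_root : bst_root T \in good.
  rewrite mem_filter path_compatible_root -bstT.
  by case: T bstT => //= a r b _; rewrite mem_cat mem_head orbT.
have sortedT : pairwise ltn (inorder T).
  by rewrite bstT -sorted_pairwise ?iota_ltn_sorted //; exact: ltn_trans.
have good_compatible : {in good &, forall a b, (a <= b)%N -> compatible l u (fnat f) a b}.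
  move=> a b; rewrite !mem_filter -!bstT => /andP[Pa Ta] /andP[Pb Tb].
  exact: path_compatible_pair sortedT Ta Tb Pa Pb.
have good_val (x : 'I_n) : (val x \notin good) = ~~ path_compatible l u (fnat f) T x.
  by rewrite mem_filter -bstT mem_bst andbT.
have := far_mass_outside lu D0 farf good_root good_compatible.
under eq_bigl do rewrite good_val.
have split_mass : \sum_(x < n | path_compatible l u (fnat f) T x) D x +
    \sum_(x < n | ~~ path_compatible l u (fnat f) T x) D x = 1.
  by rewrite -D1 [RHS](bigID (fun x : 'I_n => path_compatible l u (fnat f) T x)).
lra.
Qed.

Lemma accept_path_tester_far eps f : (0 < B)%N -> far_from_bdp D l u eps f ->
  accept_prob (prod_weight D) path_tester f <=
  (1 - eps) ^+ k + k%:R * exp_depth D T / B%:R.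
Proof.
move=> B_gt0 farf; have [D0 D1] := D_distr.
have p0 w : 0 <= prod_weight D w by exact: prod_weight_ge0.
rewrite /accept_prob; under eq_bigl do rewrite run_path_tester.
apply: le_trans (sum_orb_le p0 _ _) _; rewrite addrC lerD //.
  have G_far := mass_path_compatible_far farf.
  have G_ge0 : 0 <= \sum_(x < n | path_compatible l u (fnat f) T x) D x by exact: sumr_ge0.
  rewrite /paths_compatible.
  rewrite (sum_prod_weight_forall _ _ (fun x : 'I_n => path_compatible l u (fnat f) T x)).
  by rewrite lerXn2r ?nnegrE //; lra.
rewrite ler_pdivlMr ?ltr0n // mulrC -expected_total_depth.
exact: markov_nat.
Qed.

End PathTester.

Section Numerics.
Variable R : realType.

Lemma expr1D_ge_trinomial (e : R) k : 0 <= e ->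
  2 + 2 * k%:R * e + k%:R * (k%:R - 1) * e ^+ 2 <= 2 * (1 + e) ^+ k.
Proof.
move=> e0; elim: k => [|k IHk]; first by rewrite !mul0r expr0; lra.
have kk0 : 0 <= k%:R * (k%:R - 1) :> R.
  by case: k {IHk} => [|k]; rewrite ?mul0r // mulr_ge0 // -natr1 addrK.
have e1 : 0 <= 1 + e by lra.
have step := ler_wpM2r e1 IHk.
rewrite -[k.+1%:R]natr1 [(1 + e) ^+ k.+1]exprS.
set K := k%:R in kk0 step *; set P := (1 + e) ^+ k in step *.
have cube : 0 <= K * (K - 1) * e ^+ 3 by rewrite mulr_ge0 ?exprn_ge0.
have expand : (2 + 2 * K * e + K * (K - 1) * e ^+ 2) * (1 + e) =
    2 + 2 * (K + 1) * e + (K + 1) * (K + 1 - 1) * e ^+ 2 + K * (K - 1) * e ^+ 3.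
  by rewrite !exprS expr0; ring.
have -> : 2 * ((1 + e) * P) = 2 * P * (1 + e) by ring.
rewrite expand in step; lra.
Qed.

Lemma expr1B_le_inv7 (e : R) k : 0 < e < 1 -> 3 <= k%:R * e ->
  (1 - e) ^+ k <= 7%:R^-1.
Proof.
move=> /andP[e0 e1] ke3; have := expr1D_ge_trinomial k (ltW e0).
have -> : k%:R * (k%:R - 1) * e ^+ 2 = (k%:R * e) * (k%:R * e - e) :> R.
  by rewrite expr2; ring.
move=> trinomial; have ge7 : 7%:R <= (1 + e) ^+ k by nra.
have prod_le1 : (1 - e) ^+ k * (1 + e) ^+ k <= 1.
  by rewrite -exprMn exprn_ile1 //; nra.
have pow_ge0 : 0 <= (1 - e) ^+ k by rewrite exprn_ge0 //; lra.
rewrite -div1r ler_pdivlMr //; nra.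
Qed.

Lemma budget_overflow_le (eps d c : R) (k B : nat) : (0 < B)%N ->
  0 < eps < 1 -> eps <= d -> 0 <= c < d + d / 22%:R ->
  k%:R * eps <= 3%:R + eps -> 24%:R * d - eps < B%:R * eps ->
  k%:R * c / B%:R <= 2%:R / 11%:R.
Proof.
move=> B_gt0 /andP[eps_gt0 eps_lt1] eps_le /andP[c_ge0 c_lt] k_hi B_lo.
rewrite ler_pdivrMr ?ltr0n // -(ler_pM2r eps_gt0).
have : k%:R * c * eps <= (3%:R + eps) * c by rewrite mulrAC ler_wpM2r.
have : eps * c <= c by rewrite ler_piMl // ltW.
lra.
Qed.

End Numerics.

Definition spine (s : seq nat) : bst := foldr (fun k t => Node Leaf k t) Leaf s.

Lemma inorder_spine s : inorder (spine s) = s.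
Proof. by elim: s => //= x s ->. Qed.

Section DeltaStar.
Variables (R : realType) (n : nat) (D : 'I_n -> R).
Hypothesis D_ge0 : forall x, 0 <= D x.

Lemma exp_depth_ge0 T : 0 <= exp_depth D T.
Proof. by apply: sumr_ge0 => x _; rewrite mulr_ge0. Qed.

Lemma has_inf_exp_depth :
  has_inf [set c | exists T, is_bst_on n T /\ c = exp_depth D T].
Proof.
split; first by exists (exp_depth D (spine (iota 0 n))), (spine (iota 0 n));
  rewrite /is_bst_on inorder_spine.
by exists 0 => _ [T [_ ->]]; exact: exp_depth_ge0.
Qed.

Lemma Delta_star_ge0 : 0 <= Delta_star D.
Proof.
apply: lb_le_inf; first by case: has_inf_exp_depth.
by move=> _ [T [_ ->]]; exact: exp_depth_ge0.
Qed.

Lemma Delta_star_near d : 0 < d ->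
  exists2 T, is_bst_on n T & exp_depth D T < Delta_star D + d.
Proof.
move=> d0; have [_ [T [bstT ->]]] := inf_adherent d0 has_inf_exp_depth.
by exists T.
Qed.

Lemma mass_off_root_le_exp_depth a r b :
  \sum_(x < n | val x != r) D x <= exp_depth D (Node a r b).
Proof.
rewrite /exp_depth [leLHS]big_mkcond; apply: ler_sum => x _.
case: ifPn => [xr|_]; last by rewrite mulr_ge0.
by rewrite ler_peMr // ler1n depth_gt0.
Qed.

End DeltaStar.

Section Testers.
Variables (R : realType) (m : nat) (D : 'I_m.+1 -> R) (l u : nat -> R) (eps : R).
Local Notation n := m.+1.
Hypotheses (D_distr : is_distr D) (lu : bdp_params n l u).

Lemma far_mass_off_point f s : far_from_bdp D l u eps f ->
  eps < \sum_(x < n | val x != s) D x.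
Proof.
have [D0 _] := D_distr; move=> farf.
have single : {in [:: s] &, forall a b, (a <= b)%N -> compatible l u (fnat f) a b}.
  by move=> a b /[!inE] /eqP-> /eqP-> _; exact: compatible_refl.
by have := far_mass_outside lu D0 farf (mem_head s [::]) single; under eq_bigl do rewrite inE.
Qed.

Lemma not_far_eps_ge1 f : 1 <= eps -> ~ far_from_bdp D l u eps f.
Proof.
have [D0 D1] := D_distr; move=> eps1 /(far_mass_off_point 0); apply/negP; rewrite -leNgt.
apply: le_trans eps1; rewrite -D1 [leLHS]big_mkcond; apply: ler_sum => x _.
by case: ifP.
Qed.

Lemma not_far_Delta_star_lt f : Delta_star D < eps -> ~ far_from_bdp D l u eps f.
Proof.
have [D0 _] := D_distr; move=> Deps.
have gap : 0 < eps - Delta_star D by rewrite subr_gt0.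
have [[|a r b] bstT near] := Delta_star_near D0 gap; first by [].
move=> /(far_mass_off_point r); have := mass_off_root_le_exp_depth D0 a r b; lra.
Qed.

Lemma always_accept_tester : (forall f, ~ far_from_bdp D l u eps f) ->
  is_tester D l u eps 0 (fun _ : unit => 1) (fun _ => Decide R n true).
Proof.
move=> not_far; split => [_||_|f _|f /not_far//]; first exact: ler01.
- by rewrite sumr_const card_unit.
- exact: ql_decide.
by rewrite /accept_prob sumr_const card_unit; lra.
Qed.

Hypothesis eps_gt0 : 0 < eps.
Let k := (Num.truncn (3%:R / eps)).+1.
Let B := Num.truncn (24%:R * eps^-1 * Delta_star D).

Lemma path_tester_is_tester : eps <= Delta_star D -> eps < 1 ->
  exists T, is_tester D l u eps B (prod_weight (k := k) D) (path_tester l u T B).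
Proof.
move=> eps_le eps_lt1; have [D0 D1] := D_distr.
have Dl_gt0 : 0 < Delta_star D by apply: lt_le_trans eps_le.
have [T bstT near] := Delta_star_near D0 (divr_gt0 Dl_gt0 (ltr0n _ 22)).
exists T; split => [w|||f Pf|f farf].
- exact: prod_weight_ge0.
- by rewrite sum_prod_weight D1 expr1n.
- exact: queries_le_path_tester.
- by rewrite accept_path_tester_bdp //; lra.
have k_lo : 3%:R <= k%:R * eps.
  by rewrite -ler_pdivrMr // ltW // /k truncnS_gt.
have k_hi : k%:R * eps <= 3%:R + eps.
  have : k%:R <= 3%:R / eps + 1 by rewrite /k -natr1 lerD2r truncn_le divr_ge0 // ltW.
  by move/(ler_wpM2r (ltW eps_gt0)); rewrite mulrDl mul1r divfK ?gt_eqF.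
have B_lo : 24%:R * Delta_star D - eps < B%:R * eps.
  have : 24%:R * eps^-1 * Delta_star D * eps < (B%:R + 1) * eps.
    by rewrite ltr_pM2r // /B natr1 truncnS_gt.
  have -> : 24%:R * eps^-1 * Delta_star D * eps = 24%:R * Delta_star D.
    by field; rewrite gt_eqF.
  lra.
have B_gt0 : (0 < B)%N by rewrite -(ltr0n R); nra.
have eps01 : 0 < eps < 1 by rewrite eps_gt0.
have c_bounds : 0 <= exp_depth D T < Delta_star D + Delta_star D / 22%:R.
  by rewrite near exp_depth_ge0.
have := budget_overflow_le B_gt0 eps01 eps_le c_bounds k_hi B_lo.
have := expr1B_le_inv7 eps01 k_lo.
have := accept_path_tester_far k bstT D_distr lu B_gt0 farf.
lra.
Qed.

End Testers.

Theorem theorem4p3 (R : realType) (n : nat) (D : 'I_n -> R) (eps : R)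
    (l u : nat -> R) :
  is_distr D -> 0 < eps -> bdp_params n l u ->
  exists (q : nat) (Omega : finType) (p : Omega -> R) (T : Omega -> qtree R n),
    q%:R <= 24%:R * eps^-1 * Delta_star D /\
    is_tester D l u eps q p T.
Proof.
move=> D_distr eps_gt0 lu; case: n D D_distr lu => [|m] D D_distr lu.
  by case: D_distr => _; rewrite big_ord0 => /eqP; rewrite eq_sym oner_eq0.
have bound_ge0 : 0 <= 24%:R * eps^-1 * Delta_star D.
  have [D0 _] := D_distr.
  by rewrite mulr_ge0 ?(Delta_star_ge0 D0) // mulr_ge0 // invr_ge0 ltW.
have [/andP[eps_le eps_lt1]|not_main] := boolP ((eps <= Delta_star D) && (eps < 1)).
  have [T tester] := path_tester_is_tester D_distr lu eps_gt0 eps_le eps_lt1.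
  exists (Num.truncn (24%:R * eps^-1 * Delta_star D)).
  by do 3 eexists; split; [rewrite truncn_le | exact: tester].
exists 0%N, unit, (fun _ => 1), (fun _ => Decide R m.+1 true); split => //.
apply: always_accept_tester => f; move: not_main; rewrite negb_and -ltNge -leNgt.
by case/orP; [exact: not_far_Delta_star_lt | exact: not_far_eps_ge1].
Qed.
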